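(* Let $c<2$ and $w_0=(x_0,y_0,z_0)\in\mathbb{R}^3$ with $\kappa(w_0)=c$ and $|z_0|>2$. Then (1) for $w_1=Q_x(w_0)$: $|\tau(w_1)-\tau(w_0)|\ge |y_0z_0|\max\big(|y_0|\sqrt{z_0^2-4},\ 2\sqrt{z_0^2-c-2}\big)$; (2) for $w_1=Q_y(w_0)$: $|\tau(w_1)-\tau(w_0)|\ge |x_0z_0|\max\big(|x_0|\sqrt{z_0^2-4},\ 2\sqrt{z_0^2-c-2}\big)$.
   Context: $\kappa(x,y,z)=-x^2-y^2+z^2+xyz-2$; for $u=(x,y,z)$, $\bar z(u)=-xy-z$ and $\tau(u)=-z\,\bar z(u)$. $Q_x(x,y,z)=(yz-x,y,z)$, $Q_y(x,y,z)=(x,xz-y,z)$. *)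

From Stdlib Require Import Reals.
Open Scope R_scope.

Definition kappa (u : R * R * R) : R :=
  let '(x, y, z) := u in - x ^ 2 - y ^ 2 + z ^ 2 + x * y * z - 2.

Definition zbar (u : R * R * R) : R :=
  let '(x, y, z) := u in - x * y - z.

Definition tau (u : R * R * R) : R :=
  let '(x, y, z) := u in - z * zbar u.

Definition Qx (u : R * R * R) : R * R * R :=
  let '(x, y, z) := u in (y * z - x, y, z).

Definition Qy (u : R * R * R) : R * R * R :=
  let '(x, y, z) := u in (x, x * z - y, z).

(* The jump of tau under Q_x factors as (y z) (y z - 2 x), and on the level set kappa = c
   the square of the second factor splits as y^2 (z^2 - 4) + 4 (z^2 - c - 2), a sum of two
   nonnegative terms when |z| > 2 and c < 2; each term alone bounds |y z - 2 x| from below.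
   Q_y is the conjugate of Q_x by the swap x <-> y, which fixes kappa and tau. *)
From Stdlib Require Import Reals Lra Psatz.
Open Scope R_scope.

Lemma abs_mul_sqrt_le (a A D : R) :
  0 <= A -> a ^ 2 * A <= D ^ 2 -> Rabs a * sqrt A <= Rabs D.
Proof.
  intros hA hle.
  rewrite <- sqrt_pow2 with (x := Rabs a) by apply Rabs_pos.
  rewrite <- sqrt_mult by (apply pow2_ge_0 || exact hA).
  rewrite <- sqrt_pow2 with (x := Rabs D) by apply Rabs_pos.
  apply sqrt_le_1_alt.
  now rewrite !pow2_abs.
Qed.

Lemma Rmax_abs_mul_sqrt_le (a b A B D : R) :
  0 <= A -> 0 <= B -> D ^ 2 = a ^ 2 * A + b ^ 2 * B ->
  Rmax (Rabs a * sqrt A) (Rabs b * sqrt B) <= Rabs D.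
Proof.
  intros hA hB hD.
  assert (0 <= a ^ 2 * A) by (apply Rmult_le_pos; [apply pow2_ge_0 | exact hA]).
  assert (0 <= b ^ 2 * B) by (apply Rmult_le_pos; [apply pow2_ge_0 | exact hB]).
  apply Rmax_lub; apply abs_mul_sqrt_le; lra.
Qed.

Lemma tau_Qx_sub (x y z : R) :
  tau (Qx (x, y, z)) - tau (x, y, z) = y * z * (y * z - 2 * x).
Proof. unfold tau, Qx, zbar; ring. Qed.

Lemma sqr_Qx_factor (x y z : R) :
  (y * z - 2 * x) ^ 2 = y ^ 2 * (z ^ 2 - 4) + 2 ^ 2 * (z ^ 2 - kappa (x, y, z) - 2).
Proof. unfold kappa; ring. Qed.

Lemma kappa_swap (x y z : R) : kappa (y, x, z) = kappa (x, y, z).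
Proof. unfold kappa; ring. Qed.

Lemma tau_swap (x y z : R) : tau (y, x, z) = tau (x, y, z).
Proof. unfold tau, zbar; ring. Qed.

Lemma tau_Qy_swap (x y z : R) : tau (Qy (x, y, z)) = tau (Qx (y, x, z)).
Proof. unfold tau, Qx, Qy, zbar; ring. Qed.

Lemma sqr_ge_4 (z : R) : Rabs z > 2 -> 0 <= z ^ 2 - 4.
Proof. intros hz; rewrite <- pow2_abs; nra. Qed.

Lemma tau_Qx_growth (c x y z : R) :
  c < 2 -> kappa (x, y, z) = c -> Rabs z > 2 ->
  Rabs (tau (Qx (x, y, z)) - tau (x, y, z)) >=
    Rabs (y * z) * Rmax (Rabs y * sqrt (z ^ 2 - 4)) (2 * sqrt (z ^ 2 - c - 2)).
Proof.
  intros hc hk hz.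
  pose proof (sqr_ge_4 z hz) as hz4.
  rewrite tau_Qx_sub, Rabs_mult.
  apply Rle_ge, Rmult_le_compat_l; [apply Rabs_pos |].
  rewrite <- (Rabs_pos_eq 2) at 1 by lra.
  apply Rmax_abs_mul_sqrt_le; [lra | lra |].
  rewrite <- hk; apply sqr_Qx_factor.
Qed.

Theorem mainTheorem9 (c x0 y0 z0 : R) :
  c < 2 ->
  kappa (x0, y0, z0) = c ->
  Rabs z0 > 2 ->
  Rabs (tau (Qx (x0, y0, z0)) - tau (x0, y0, z0)) >=
    Rabs (y0 * z0) * Rmax (Rabs y0 * sqrt (z0 ^ 2 - 4)) (2 * sqrt (z0 ^ 2 - c - 2))
  /\
  Rabs (tau (Qy (x0, y0, z0)) - tau (x0, y0, z0)) >=
    Rabs (x0 * z0) * Rmax (Rabs x0 * sqrt (z0 ^ 2 - 4)) (2 * sqrt (z0 ^ 2 - c - 2)).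
Proof.
  intros hc hk hz.
  split; [now apply tau_Qx_growth |].
  rewrite tau_Qy_swap, <- (tau_swap x0 y0 z0).
  apply tau_Qx_growth; [exact hc | now rewrite kappa_swap | exact hz].
Qed.
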